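(* (i) For each $k\in\mathbb{N}$ let $f_k=q_{A_k}(\cdot-a_k)+\langle b_k,\cdot\rangle+c_k$, where $A_k$ is a maximally monotone symmetric linear relation on $\mathbb{R}^n$, $a_k,b_k\in\mathbb{R}^n$, $c_k\in\mathbb{R}$. If $f_k$ epiconverges to $f$ and $f$ is proper, then $f=q_A(\cdot-a)+\langle b,\cdot\rangle+c$ for some maximally monotone symmetric linear relation $A$, $a,b\in\mathbb{R}^n$, $c\in\mathbb{R}$. (ii) For each $k$ let $f_k=q_{A_k}+c_k$ with $A_k$ a maximally monotone symmetric linear relation and $c_k\in\mathbb{R}$. If $f_k$ epiconverges to $f$ and $f$ is proper, then $f=q_A+c$ for some maximally monotone symmetric linear relation $A$ and $c\in\mathbb{R}$.
   Context: Linear relation: operator $\mathbb{R}^n\rightrightarrows\mathbb{R}^n$ with linear-subspace graph; monotone, maximally monotone and symmetric ($\langle x,y^*\rangle=\langle y,x^*\rangle$ on the graph) as usual. $q_A(x)=\frac12\langle x,Ax\rangle$ on $\operatorname{dom}A$, $\infty$ elsewhere. Epiconvergence means Painlevé–Kuratowski convergence of epigraphs. *)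

From HB Require Import structures.
From mathcomp Require Import all_boot all_order all_algebra.
From mathcomp Require Import all_classical all_reals all_analysis.
Set Implicit Arguments. Unset Strict Implicit. Unset Printing Implicit Defensive.
Import Order.TTheory GRing.Theory Num.Theory.
Import numFieldNormedType.Exports.
Local Open Scope classical_set_scope.
Local Open Scope ring_scope.

Section Defs.
Context {R : realType} {n : nat}.
Local Notation V := 'rV[R]_n.

Definition dotp (x y : V) : R := \sum_(i < n) x ord0 i * y ord0 i.

(* A linear relation R^n ⇉ R^n is given by its graph, a linear subspace of R^n × R^n *)
Definition linrel (A : set (V * V)) : Prop :=
  [/\ A (0, 0),
      (forall x x' y y', A (x, x') -> A (y, y') -> A (x + y, x' + y')) &
      (forall (r : R) x x', A (x, x') -> A (r *: x, r *: x')) ].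

Definition monotone_rel (A : set (V * V)) : Prop :=
  forall x x' y y', A (x, x') -> A (y, y') -> 0 <= dotp (x - y) (x' - y').

Definition max_monotone (A : set (V * V)) : Prop :=
  monotone_rel A /\
  forall B : set (V * V), monotone_rel B -> A `<=` B -> B = A.

Definition symmetric_rel (A : set (V * V)) : Prop :=
  forall x x' y y', A (x, x') -> A (y, y') -> dotp x y' = dotp y x'.

Definition mm_sym_linrel (A : set (V * V)) : Prop :=
  [/\ linrel A, max_monotone A & symmetric_rel A].

Definition qA (A : set (V * V)) (x : V) : \bar R :=
  if `[< exists y, A (x, y) >]
  then ((2^-1) * dotp x (xget 0 [set y | A (x, y)]))%:E
  else +oo%E.

Definition proper_fun (f : V -> \bar R) : Prop :=
  (forall x, (-oo < f x)%E) /\ (exists x, (f x < +oo)%E).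

Definition epigraph (f : V -> \bar R) : set (V * R) :=
  [set p | (f p.1 <= p.2%:E)%E].

End Defs.

Definition inner_limit {T : topologicalType} (C : nat -> set T) : set T :=
  [set x | exists u : nat -> T, u @ \oo --> x /\ \forall k \near \oo, C k (u k)].

Definition outer_limit {T : topologicalType} (C : nat -> set T) : set T :=
  [set x | exists (phi : nat -> nat) (u : nat -> T),
      (forall k, (phi k < phi k.+1)%N) /\ (forall k, C (phi k) (u k)) /\
      u @ \oo --> x].

Definition PK_converges {T : topologicalType} (C : nat -> set T) (D : set T) : Prop :=
  outer_limit C `<=` D /\ D `<=` inner_limit C.

Definition epiconverges {R : realType} {n : nat}
  (f : nat -> 'rV[R]_n -> \bar R) (g : 'rV[R]_n -> \bar R) : Prop :=
  PK_converges (fun k => epigraph (f k)) (epigraph g).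

Definition quadf {R : realType} {n : nat} (A : set ('rV[R]_n * 'rV[R]_n))
  (a b : 'rV[R]_n) (c : R) (x : 'rV[R]_n) : \bar R :=
  (qA A (x - a) + (dotp b x + c)%:E)%E.

From HB Require Import structures.
From mathcomp Require Import all_boot all_order all_algebra.
From mathcomp Require Import all_classical all_reals all_analysis.
From mathcomp Require Import ring lra.
Import Order.TTheory GRing.Theory Num.Theory.
Import numFieldNormedType.Exports.
Local Open Scope classical_set_scope.
Local Open Scope ring_scope.
Set Implicit Arguments. Unset Strict Implicit.

(* Along any line through two points of its domain, each f_k is a convex
   quadratic.  Recovery sequences bound the epi-limit f from above, and at a
   point where f is finite the f_k are eventually bounded below; comparing with
   Lagrange interpolation, the value of f outside the span of three points of a
   line is at most that of the quadratic through the three values.  Applied to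
   four points this forces equality, so f is again a convex quadratic along
   every line of its domain, which is therefore affine.
   Translating by a point a of the domain, the even part q of v |-> f (a + v)
   satisfies the parallelogram law and its odd part l is additive; as in the
   Jordan-von Neumann theorem, q polarizes to a positive semidefinite symmetric
   bilinear form B on the domain subspace L, and l is linear.  The relation
   {(x, y) | x in L, <y, w> = B x w for all w in L} is then a maximally
   monotone symmetric linear relation A with q = q_A, so that
   f = q_A(. - a) + <b, .> + c.  For (ii), evenness passes to the epi-limit,
   so 0 lies in the domain and the linear part vanishes. *)

Ltac row_ring := apply/rowP => ?; rewrite !mxE; ring.
Ltac row_field := apply/rowP => ?; rewrite !mxE; field.

(** * Quadratic interpolation *)

Section Interpolation.
Variable R : realFieldType.
Implicit Types t : R.

Let subr_neq0 (x y : R) : x < y -> (x - y != 0) && (y - x != 0).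
Proof. by move=> lt_xy; rewrite !subr_eq0 lt_eqF // gt_eqF. Qed.

Definition lagrange3 u1 u2 u3 v1 v2 v3 t : R :=
  v1 * ((t - u2) * (t - u3) / ((u1 - u2) * (u1 - u3))) +
  v2 * ((t - u1) * (t - u3) / ((u2 - u1) * (u2 - u3))) +
  v3 * ((t - u1) * (t - u2) / ((u3 - u1) * (u3 - u2))).

Lemma lagrange3B u1 u2 u3 v1 v2 v3 w1 w2 w3 t :
  lagrange3 u1 u2 u3 (v1 - w1) (v2 - w2) (v3 - w3) t =
  lagrange3 u1 u2 u3 v1 v2 v3 t - lagrange3 u1 u2 u3 w1 w2 w3 t.
Proof. by rewrite /lagrange3; ring. Qed.

Lemma lagrange30 u1 u2 u3 t : lagrange3 u1 u2 u3 0 0 0 t = 0.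
Proof. by rewrite /lagrange3 !mul0r !addr0. Qed.

Lemma lagrange3_quadratic (a b c : R) u1 u2 u3 t : u1 < u2 < u3 ->
  lagrange3 u1 u2 u3 (a * u1 ^+ 2 + b * u1 + c) (a * u2 ^+ 2 + b * u2 + c)
    (a * u3 ^+ 2 + b * u3 + c) t = a * t ^+ 2 + b * t + c.
Proof.
move=> /andP[lt12 lt23].
have /andP[d12 d21] := subr_neq0 lt12; have /andP[d23 d32] := subr_neq0 lt23.
have /andP[d13 d31] := subr_neq0 (lt_trans lt12 lt23).
by rewrite /lagrange3; field; rewrite ?d12 ?d13 ?d23 ?d21 ?d31 ?d32.
Qed.

Lemma lagrange3_le u1 u2 u3 v1 v2 v3 w1 w2 w3 t :
  u1 < u2 < u3 -> 0 <= (t - u1) * (t - u3) ->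
  v1 <= w1 -> w2 <= v2 -> v3 <= w3 ->
  lagrange3 u1 u2 u3 v1 v2 v3 t <= lagrange3 u1 u2 u3 w1 w2 w3 t.
Proof.
move=> /andP[lt12 lt23] ht le1 le2 le3.
have out : t <= u1 \/ u3 <= t by case: (lerP t u1) => ?; [left | right; nra].
apply: lerD; first apply: lerD.
- apply: ler_wpM2r => //; apply: divr_ge0; nra.
- apply: ler_wnM2r => //; apply: mulr_ge0_le0; first exact: ht.
  by rewrite invr_le0; nra.
- apply: ler_wpM2r => //; apply: divr_ge0; nra.
Qed.

Lemma lagrange3_subr2 u1 u2 u3 v1 v2 v3 t : u1 < u2 < u3 -> 0 <= (t - u1) * (t - u3) ->
  exists2 K, 0 <= K & forall d,
    lagrange3 u1 u2 u3 v1 (v2 - d) v3 t = lagrange3 u1 u2 u3 v1 v2 v3 t + d * K.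
Proof.
move=> u123 ht; exists (lagrange3 u1 u2 u3 0 (-1) 0 t).
  by rewrite -[X in X <= _](lagrange30 u1 u2 u3 t) lagrange3_le // lerN10.
by move=> d; rewrite /lagrange3; ring.
Qed.

Lemma lagrange3_extrapolation_eq p1 p2 p3 p4 v1 v2 v3 v4 :
  p1 < p2 -> p2 < p3 -> p3 < p4 ->
  v4 <= lagrange3 p1 p2 p3 v1 v2 v3 p4 -> v1 <= lagrange3 p2 p3 p4 v2 v3 v4 p1 ->
  [/\ v1 = lagrange3 p2 p3 p4 v2 v3 v4 p1, v2 = lagrange3 p1 p3 p4 v1 v3 v4 p2,
      v3 = lagrange3 p1 p2 p4 v1 v2 v4 p3 & v4 = lagrange3 p1 p2 p3 v1 v2 v3 p4].
Proof.
move=> lt12 lt23 lt34 le4 le1.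
have lt13 := lt_trans lt12 lt23; have lt24 := lt_trans lt23 lt34.
have /andP[d12 d21] := subr_neq0 lt12; have /andP[d13 d31] := subr_neq0 lt13.
have lt14 := lt_trans lt13 lt34; have /andP[d14 d41] := subr_neq0 lt14.
have /andP[d23 d32] := subr_neq0 lt23; have /andP[d24 d42] := subr_neq0 lt24.
have /andP[d34 d43] := subr_neq0 lt34.
(* [D] is the third divided difference of the data; each value minus its
   interpolation by the other three is [D] times a nonzero product. *)
pose D := v1 / ((p1 - p2) * (p1 - p3) * (p1 - p4))
        + v2 / ((p2 - p1) * (p2 - p3) * (p2 - p4))
        + v3 / ((p3 - p1) * (p3 - p2) * (p3 - p4))
        + v4 / ((p4 - p1) * (p4 - p2) * (p4 - p3)).
have [E1 E2 E3 E4] : [/\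
    v1 - lagrange3 p2 p3 p4 v2 v3 v4 p1 = D * ((p1 - p2) * (p1 - p3) * (p1 - p4)),
    v2 - lagrange3 p1 p3 p4 v1 v3 v4 p2 = D * ((p2 - p1) * (p2 - p3) * (p2 - p4)),
    v3 - lagrange3 p1 p2 p4 v1 v2 v4 p3 = D * ((p3 - p1) * (p3 - p2) * (p3 - p4)) &
    v4 - lagrange3 p1 p2 p3 v1 v2 v3 p4 = D * ((p4 - p1) * (p4 - p2) * (p4 - p3))].
  by split; rewrite /lagrange3 /D; field;
    rewrite ?d12 ?d13 ?d14 ?d23 ?d24 ?d34 ?d21 ?d31 ?d41 ?d32 ?d42 ?d43.
have D0 : D = 0.
  have P4 : 0 < (p4 - p1) * (p4 - p2) * (p4 - p3) by rewrite !mulr_gt0 // subr_gt0.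
  have P1 : (p1 - p2) * (p1 - p3) * (p1 - p4) < 0.
    have P12 : 0 < (p1 - p2) * (p1 - p3) by rewrite -mulrNN !opprB mulr_gt0 // subr_gt0.
    by rewrite pmulr_rlt0 // subr_lt0.
  move: le4 le1; rewrite -subr_le0 E4 -[v1 <= _]subr_le0 E1; nra.
by split; apply/eqP; rewrite -subr_eq0 ?E1 ?E2 ?E3 ?E4 D0 mul0r.
Qed.

Definition extrapolation_bounded (psi : R -> R) : Prop :=
  forall u1 u2 u3 t, u1 < u2 < u3 -> 0 <= (t - u1) * (t - u3) ->
    psi t <= lagrange3 u1 u2 u3 (psi u1) (psi u2) (psi u3) t.

Lemma extrapolation_boundedBquadratic (psi : R -> R) (a b c : R) :
  extrapolation_bounded psi ->
  extrapolation_bounded (fun t => psi t - (a * t ^+ 2 + b * t + c)).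
Proof.
move=> psiB u1 u2 u3 t u123 ht.
by rewrite lagrange3B (lagrange3_quadratic a b c t u123) lerD2r psiB.
Qed.

Lemma extrapolation_bounded_eq0 (e : R -> R) : extrapolation_bounded e ->
  e 0 = 0 -> e 2^-1 = 0 -> e 1 = 0 -> forall t, e t = 0.
Proof.
move=> eB e0 eh e1.
have eq4 p1 p2 p3 p4 : p1 < p2 -> p2 < p3 -> p3 < p4 -> [/\
    e p1 = lagrange3 p2 p3 p4 (e p2) (e p3) (e p4) p1,
    e p2 = lagrange3 p1 p3 p4 (e p1) (e p3) (e p4) p2,
    e p3 = lagrange3 p1 p2 p4 (e p1) (e p2) (e p4) p3 &
    e p4 = lagrange3 p1 p2 p3 (e p1) (e p2) (e p3) p4].
  move=> lt12 lt23 lt34; apply: lagrange3_extrapolation_eq => //.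
    by apply: eB; [rewrite lt12 lt23 | nra].
  by apply: eB; [rewrite lt23 lt34 | nra].
have h0 : 0 < 2^-1 :> R by rewrite invr_gt0.
have h1 : 2^-1 < 1 :> R by rewrite invf_lt1 // ltr1n.
move=> t; case: (ltrgtP t 0) => [t0|t0|->//].
  by have [-> _ _ _] := eq4 _ _ _ _ t0 h0 h1; rewrite e0 eh e1 lagrange30.
case: (ltrgtP t 2^-1) => [th|th|->//].
  by have [_ -> _ _] := eq4 _ _ _ _ t0 th h1; rewrite e0 eh e1 lagrange30.
case: (ltrgtP t 1) => [t1|t1|->//].
  by have [_ _ -> _] := eq4 _ _ _ _ h0 th t1; rewrite e0 eh e1 lagrange30.
by have [_ _ _ ->] := eq4 _ _ _ _ h0 h1 t1; rewrite e0 eh e1 lagrange30.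
Qed.

Theorem extrapolation_bounded_quadratic (psi : R -> R) : extrapolation_bounded psi ->
  exists a b c : R, forall t, psi t = a * t ^+ 2 + b * t + c.
Proof.
move=> psiB; pose c := psi 0; pose a := 2 * psi 0 - 4 * psi 2^-1 + 2 * psi 1.
pose b := psi 1 - psi 0 - a; exists a, b, c => t.
apply/subr0_eq; move: t.
by apply: (extrapolation_bounded_eq0 (extrapolation_boundedBquadratic a b c psiB));
  rewrite /= /b /a /c; field.
Qed.

End Interpolation.

Section PlaneQuadratic.
Variables (R : realFieldType) (G : R -> R -> R).
Hypothesis G_line : forall s t ds dt r,
  G (s + r * ds) (t + r * dt) =
    G s t + r * ((G (s + ds) (t + dt) - G (s - ds) (t - dt)) / 2)
    + r * r * ((G (s + ds) (t + dt) + G (s - ds) (t - dt) - 2 * G s t) / 2).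

Local Notation arith := (mulr1, mulr0, mulrN1, mulrNN, add0r, addr0, subr0, sub0r, opprK, oppr0).

(* Each corner value [G (+-2) (+-2)] is computed twice: along a diagonal
   through the origin, and along a vertical line whose points are in turn
   computed along horizontal lines. *)
Lemma plane_parallelogram_odd :
  G 1 1 + G (-1) (-1) + G 1 (-1) + G (-1) 1
    = 2 * (G 1 0 + G (-1) 0 + G 0 1 + G 0 (-1)) - 4 * G 0 0 /\
  G 1 1 - G (-1) (-1) = G 1 0 - G (-1) 0 + (G 0 1 - G 0 (-1)).
Proof.
move: (G_line 0 0 1 1 2) (G_line 0 0 1 1 (-2)) (G_line 0 0 1 (-1) 2) (G_line 0 0 1 (-1) (-2)).
move: (G_line 2 0 0 1 2) (G_line 2 0 0 1 (-2)) (G_line (-2) 0 0 1 2) (G_line (-2) 0 0 1 (-2)).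
move: (G_line 0 0 1 0 2) (G_line 0 1 1 0 2) (G_line 0 (-1) 1 0 2).
move: (G_line 0 0 1 0 (-2)) (G_line 0 1 1 0 (-2)) (G_line 0 (-1) 1 0 (-2)).
by rewrite !arith => *; split; lra.
Qed.

Lemma plane_homogeneous s :
  G s 1 + G (- s) (-1) - (G s (-1) + G (- s) 1)
    = s * (G 1 1 + G (-1) (-1) - (G 1 (-1) + G (-1) 1)).
Proof.
move: (G_line 0 1 1 0 s) (G_line 0 1 1 0 (- s)) (G_line 0 (-1) 1 0 s) (G_line 0 (-1) 1 0 (- s)).
by rewrite !arith => -> -> -> ->; field.
Qed.
End PlaneQuadratic.

Lemma affine_ge0_slope (R : realFieldType) (a b : R) : (forall t, 0 <= a - t * b) -> b = 0.
Proof.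
move=> ge0; apply: contrapT => /eqP b0.
by have := ge0 ((a + 1) / b); rewrite divfK //; lra.
Qed.

Lemma quadratic_ge0_slope (R : realFieldType) (a b : R) :
  (forall t, 0 <= t * t * b - t * a) -> a = 0.
Proof.
move=> ge0; apply: contrapT => /eqP a0.
pose e := (`|b| + 1)^-1.
have e0 : 0 < e by rewrite invr_gt0 ltr_wpDl.
have eb : e * b < 1.
  rewrite mulrC ltr_pdivrMr ?ltr_wpDl // mul1r.
  by apply: le_lt_trans (ler_norm b) _; rewrite ltrDl.
have aa : 0 < a * a by rewrite -expr2 exprn_even_gt0.
have := ge0 (e * a).
have -> : e * a * (e * a) * b - e * a * a = (e * (a * a)) * (e * b - 1) by ring.
have p0 : 0 < e * (a * a) by rewrite mulr_gt0.
by move: p0 eb; set P := e * (a * a); set Q := e * b; nra.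
Qed.

Section InnerProduct.
Context {R : realType} {n : nat}.
Local Notation V := 'rV[R]_n.
Implicit Types x y z : V.

Lemma dotpC x y : dotp x y = dotp y x.
Proof. by apply: eq_bigr => i _; rewrite mulrC. Qed.

Lemma dotpDl x y z : dotp (x + y) z = dotp x z + dotp y z.
Proof. by rewrite /dotp -big_split; apply: eq_bigr => i _; rewrite !mxE mulrDl. Qed.

Lemma dotpZl (t : R) x z : dotp (t *: x) z = t * dotp x z.
Proof. by rewrite /dotp mulr_sumr; apply: eq_bigr => i _; rewrite !mxE mulrA. Qed.

Lemma dotp0l z : dotp 0 z = 0.
Proof. by rewrite -(scale0r 0) dotpZl mul0r. Qed.

Lemma dotpNl x z : dotp (- x) z = - dotp x z.
Proof. by rewrite -scaleN1r dotpZl mulN1r. Qed.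

Lemma dotpBl x y z : dotp (x - y) z = dotp x z - dotp y z.
Proof. by rewrite dotpDl dotpNl. Qed.

Lemma dotpDr x y z : dotp z (x + y) = dotp z x + dotp z y.
Proof. by rewrite dotpC dotpDl !(dotpC z). Qed.

Lemma dotpZr (t : R) x z : dotp z (t *: x) = t * dotp z x.
Proof. by rewrite dotpC dotpZl dotpC. Qed.

Lemma dotpNr x z : dotp z (- x) = - dotp z x.
Proof. by rewrite dotpC dotpNl dotpC. Qed.

Lemma dotpBr x y z : dotp z (x - y) = dotp z x - dotp z y.
Proof. by rewrite dotpDr dotpNr. Qed.

Lemma dotp_mulmx x y : dotp x y = (x *m y^T) 0 0.
Proof. by rewrite mxE; apply: eq_bigr => i _; rewrite mxE. Qed.

End InnerProduct.

Section QuadraticOnLines.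
Context {R : realType} {n : nat}.
Local Notation V := 'rV[R]_n.

Lemma qA_graph (A : set (V * V)) x y : symmetric_rel A -> A (x, y) ->
  qA A x = (2^-1 * dotp x y)%:E.
Proof.
move=> symA Axy; rewrite /qA asboolT; last by exists y.
by rewrite (symA x y x _ Axy (xgetPex 0 (ex_intro (fun y => A (x, y)) y Axy))).
Qed.

Lemma qA_notin_dom (A : set (V * V)) x : ~ (exists y, A (x, y)) -> qA A x = +oo%E.
Proof. by move=> nAx; rewrite /qA asboolF. Qed.

Lemma qA_gtNy (A : set (V * V)) x : (-oo < qA A x)%E.
Proof. by rewrite /qA; case: ifP => _ //; rewrite ltNyr. Qed.

Lemma qA_oppr (A : set (V * V)) x : linrel A -> symmetric_rel A -> qA A (- x) = qA A x.
Proof.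
move=> [_ _ AZ] symA; have AN y z : A (y, z) -> A (- y, - z).
  by move=> /(AZ (-1)); rewrite !scaleN1r.
have [[y Axy]|nAx] := pselect (exists y, A (x, y)).
  by rewrite (qA_graph symA Axy) (qA_graph symA (AN _ _ Axy)) dotpNl dotpNr opprK.
rewrite !qA_notin_dom // => -[y /AN]; rewrite opprK => Axy; apply: nAx; by exists (- y).
Qed.

Lemma quadf00 (A : set (V * V)) c : quadf A 0 0 c = (fun x => qA A x + c%:E)%E.
Proof. by apply/funext => x; rewrite /quadf subr0 dotp0l add0r. Qed.

Definition quadratic_on_lines (h : V -> \bar R) : Prop :=
  (forall x, (-oo < h x)%E) /\
  forall x v, (h x < +oo)%E -> (h (x + v)%R < +oo)%E ->
    exists a b c : R, 0 <= a /\ forall t, h (x + t *: v) = (a * t ^+ 2 + b * t + c)%:E.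

Lemma quadratic_on_lines_fin (h : V -> \bar R) x v t : quadratic_on_lines h ->
  (h x < +oo)%E -> (h (x + v)%R < +oo)%E -> (h (x + t *: v)%R < +oo)%E.
Proof. by move=> [_ hQ] hx hxv; have [a [b [c [_ ->]]]] := hQ x v hx hxv; rewrite ltry. Qed.

Lemma quadratic_on_lines_reparam (h : V -> \bar R) p v (u1 u3 : R) :
  quadratic_on_lines h -> u1 != u3 ->
  (h (p + u1 *: v)%R < +oo)%E -> (h (p + u3 *: v)%R < +oo)%E ->
  exists a b c : R, 0 <= a /\ forall t, h (p + t *: v) = (a * t ^+ 2 + b * t + c)%:E.
Proof.
move=> [_ hQ] u13 h1 h3; have d0 : u3 - u1 != 0 by rewrite subr_eq0 eq_sym.
have [|a [b [c [a0 hl]]]] := hQ (p + u1 *: v) ((u3 - u1) *: v) h1.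
  by rewrite -addrA -scalerDl addrCA subrr addr0.
pose al := (u3 - u1)^-1; pose be := - u1 / (u3 - u1).
exists (a * al ^+ 2), (2 * a * al * be + b * al), (a * be ^+ 2 + b * be + c).
split=> [|t]; first by rewrite mulr_ge0 // sqr_ge0.
have -> : p + t *: v = p + u1 *: v + (al * t + be) *: ((u3 - u1) *: v).
  by rewrite /al /be; row_field.
by rewrite hl; congr (_%:E); ring.
Qed.

Lemma quadf_quadratic_on_lines (A : set (V * V)) a b c :
  linrel A -> monotone_rel A -> symmetric_rel A -> quadratic_on_lines (quadf A a b c).
Proof.
move=> [A00 AD AZ] monoA symA; split.
  move=> x; rewrite /quadf; case: (qA A (x - a)) (qA_gtNy A (x - a)) => // r _.
  by rewrite -EFinD ltNyr.
have dom x : (quadf A a b c x < +oo)%E -> exists y, A (x - a, y).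
  move=> hx; apply: contrapT => nAx.
  by move: hx; rewrite /quadf qA_notin_dom.
move=> x v /dom [X AX] /dom [Y AY].
have AvYX : A (v, Y - X).
  have e : x + v - a + (-1) *: (x - a) = v by row_ring.
  by have := AD _ _ _ _ AY (AZ (-1) _ _ AX); rewrite e scaleN1r.
have Adir t : A (x + t *: v - a, X + t *: (Y - X)).
  by rewrite addrAC; exact: AD _ _ _ _ AX (AZ t _ _ AvYX).
have vYX_ge0 : 0 <= dotp v (Y - X).
  by have := monoA _ _ _ _ AvYX A00; rewrite !subr0.
exists (2^-1 * dotp v (Y - X)),
       (2^-1 * (dotp (x - a) (Y - X) + dotp v X) + dotp b v),
       (2^-1 * dotp (x - a) X + dotp b x + c).
split=> [|t]; first by rewrite mulr_ge0 // invr_ge0.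
rewrite /quadf (qA_graph symA (Adir t)) -EFinD; congr (_%:E).
rewrite !(dotpDl, dotpDr, dotpZl, dotpZr, dotpBl, dotpBr); ring.
Qed.

End QuadraticOnLines.

(** * Relations induced by bilinear forms *)

Section Subspace.
Context {R : realType} {n : nat}.
Local Notation V := 'rV[R]_n.
Variable L : set V.
Hypotheses (L0 : L 0) (LD : forall u v, L u -> L v -> L (u + v))
  (LZ : forall (t : R) v, L v -> L (t *: v)).

Lemma subspace_rowspace : exists k (M : 'M[R]_(k, n)), forall v, L v <-> (v <= M)%MS.
Proof.
have L_mul k (M : 'M[R]_(k, n)) c : (forall i, L (row i M)) -> L (c *m M).
  move=> ML; rewrite mulmx_sum_row.
  by apply: big_ind => // i _; exact/LZ/ML.
pose free_in k := `[< exists M : 'M[R]_(k, n), row_free M /\ forall i, L (row i M) >].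
have free0 : exists k, free_in k.
  by exists 0%N; apply/asboolP; exists 0; split; [rewrite /row_free mxrank0 | case].
have free_le k : free_in k -> (k <= n)%N.
  by move=> /asboolP [M [/eqP Mfree _]]; rewrite -Mfree rank_leq_col.
have [k /asboolP [M [Mfree ML]] kmax] := ex_maxnP free0 free_le.
exists k, M => v; split; last by move=> /submxP [c ->]; exact: L_mul.
move=> Lv; apply: contrapT => /negP vM.
suff : (k.+1 <= k)%N by rewrite ltnn.
apply: kmax; apply/asboolP; exists (col_mx v M); split.
  rewrite -row_leq_rank -(addsmxE v M).1.
  have : (M < v + M)%MS by rewrite ltmxE addsmxSr /= addsmx_sub negb_and vM.
  by rewrite ltmxErank => /andP[_]; move/eqP: Mfree => ->.
move=> i; case: (split_ordP (i : 'I_(1 + k))) => j ->.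
  by have E := rowKu j v M; rewrite [row _ _]E (ord1 j) row_id.
by have E := rowKd j v M; rewrite [row _ _]E.
Qed.

Lemma perp_perp_subset u :
  (forall z, (forall w, L w -> dotp z w = 0) -> dotp u z = 0) -> L u.
Proof.
move=> u_perp; have [k [M LM]] := subspace_rowspace.
pose K := kermx M^T.
have KM : K *m M^T = 0 by exact: mulmx_ker.
have K_perp i w : L w -> dotp (row i K) w = 0.
  move=> /LM /submxP [c ->].
  by rewrite dotp_mulmx trmx_mul mulmxA -row_mul KM row0 mul0mx mxE.
have uK : (u <= kermx K^T)%MS.
  rewrite sub_kermx; apply/eqP/rowP => j; rewrite [RHS]mxE -(u_perp (row j K)).
    by rewrite dotp_mulmx !mxE; apply: eq_bigr => l _; rewrite !mxE.
  by move=> w; exact: K_perp.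
have MK : (M <= kermx K^T)%MS by rewrite sub_kermx -[M]trmxK -trmx_mul KM trmx0.
have rkMK : \rank M = \rank (kermx K^T).
  by rewrite mxrank_ker mxrank_tr mxrank_ker mxrank_tr subKn // rank_leq_col.
have := (mxrank_leqif_eq MK).2; rewrite rkMK eqxx => /esym/andP[_ KM'].
by apply/LM; exact: submx_trans uK KM'.
Qed.

Lemma dotp_represent (phi : V -> R) :
  (forall u v, L u -> L v -> phi (u + v) = phi u + phi v) ->
  (forall (t : R) v, L v -> phi (t *: v) = t * phi v) ->
  exists r : V, forall w, L w -> dotp r w = phi w.
Proof.
move=> phiD phiZ; have [k [M LM]] := subspace_rowspace.
pose pi (w : V) := w *m (pinvmx M *m M).
have piL w : L (pi w) by apply/LM; rewrite /pi mulmxA submxMl.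
have piK w : L w -> pi w = w by move=> /LM Mw; rewrite /pi mulmxA mulmxKpV.
exists (\row_j phi (pi 'e_j)) => w Lw.
rewrite -{2}(piK w Lw) {2}(row_sum_delta w) /pi mulmx_suml.
have [_ ->] : L (\sum_(j < n) w 0 j *: 'e_j *m (pinvmx M *m M)) /\
    phi (\sum_(j < n) w 0 j *: 'e_j *m (pinvmx M *m M)) = \sum_(j < n) w 0 j * phi (pi 'e_j).
  apply: (big_rec2 (fun x y => L x /\ phi x = y)) => [|j x y _ [Lx <-]].
    by split; rewrite // -(scale0r 0) phiZ // mul0r.
  have Lwj : L (w 0 j *: ('e_j *m (pinvmx M *m M))) by apply: LZ; exact: piL.
  rewrite -scalemxAl; split; first exact: LD.
  by rewrite phiD // phiZ //; exact: piL.
by rewrite /dotp; apply: eq_bigr => j _; rewrite mxE mulrC.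
Qed.

End Subspace.

Section FormRelation.
Context {R : realType} {n : nat}.
Local Notation V := 'rV[R]_n.
Variables (L : set V) (beta : V -> V -> R).
Hypotheses (L0 : L 0) (LD : forall u v, L u -> L v -> L (u + v))
  (LZ : forall (t : R) v, L v -> L (t *: v)).
Hypotheses (betaD : forall x y w, L x -> L y -> L w -> beta (x + y) w = beta x w + beta y w)
  (betaZ : forall (t : R) x w, L x -> L w -> beta (t *: x) w = t * beta x w)
  (betaC : forall x y, L x -> L y -> beta x y = beta y x)
  (beta_ge0 : forall x, L x -> 0 <= beta x x).

Definition form_rel : set (V * V) :=
  [set p | L p.1 /\ forall w, L w -> dotp p.2 w = beta p.1 w].

Let LN v : L v -> L (- v). Proof. by move=> Lv; rewrite -scaleN1r; exact: LZ. Qed.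

Let beta0 w : L w -> beta 0 w = 0.
Proof. by move=> Lw; rewrite -(scale0r 0) betaZ // mul0r. Qed.

Let betaB x y w : L x -> L y -> L w -> beta (x - y) w = beta x w - beta y w.
Proof.
move=> Lx Ly Lw; rewrite betaD //; last exact: LN.
by have := betaZ (-1) Ly Lw; rewrite scaleN1r mulN1r => ->.
Qed.

Lemma form_rel_dom x : L x -> exists y, form_rel (x, y).
Proof.
move=> Lx; have [||y yx] := @dotp_represent _ _ L L0 LD LZ (beta x).
- by move=> u v Lu Lv; rewrite !(betaC Lx) ?betaD //; exact: LD.
- by move=> t v Lv; rewrite !(betaC Lx) ?betaZ //; exact: LZ.
- by exists y; split.
Qed.

Lemma form_rel_linrel : linrel form_rel.
Proof.
split.
- by split=> // w Lw /=; rewrite dotp0l beta0.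
- move=> x x' y y' [/= Lx xx'] [/= Ly yy']; split=> [|w Lw /=]; first exact: LD.
  by rewrite dotpDl xx' // yy' // betaD.
- move=> t x x' [/= Lx xx']; split=> [|w Lw /=]; first exact: LZ.
  by rewrite dotpZl xx' // betaZ.
Qed.

Lemma form_rel_sym : symmetric_rel form_rel.
Proof.
by move=> x x' y y' [/= Lx xx'] [/= Ly yy']; rewrite dotpC yy' // dotpC xx' // betaC.
Qed.

Lemma form_rel_monotone : monotone_rel form_rel.
Proof.
move=> x x' y y' [/= Lx xx'] [/= Ly yy']; have Lxy : L (x - y) by exact/LD/LN.
by rewrite dotpC dotpBl xx' // yy' // -betaB // beta_ge0.
Qed.

Lemma form_rel_max_monotone : max_monotone form_rel.
Proof.
split=> [|B monoB subB]; first exact: form_rel_monotone.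
apply/seteqP; split=> [[u w] Buw|]; last exact: subB.
have Lu : L u.
  apply: perp_perp_subset => // z z_perp; apply: (@affine_ge0_slope _ (dotp u w)) => t.
  have Az : form_rel (0, t *: z) by split=> // w' Lw' /=; rewrite dotpZl z_perp // beta0 // mulr0.
  by have := monoB _ _ _ _ Buw (subB _ Az); rewrite subr0 dotpBr dotpZr.
have [yu [_ yuE]] := form_rel_dom Lu.
split=> // v Lv /=; have [yv [_ yvE]] := form_rel_dom Lv.
have Aline t : form_rel (u + t *: v, yu + t *: yv).
  split=> [|w' Lw' /=]; first by apply: LD => //; exact: LZ.
  by rewrite dotpDl dotpZl yuE // yvE // betaD ?betaZ //; exact: LZ.
have : dotp v (w - yu) = 0.
  apply: (@quadratic_ge0_slope _ _ (dotp v yv)) => t.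
  have := monoB _ _ _ _ Buw (subB _ (Aline t)).
  have -> : u - (u + t *: v) = (- t) *: v by row_ring.
  have -> : w - (yu + t *: yv) = (w - yu) + (- t) *: yv by row_ring.
  rewrite dotpZl dotpDr dotpZr; lra.
by rewrite dotpBr -yuE // => /subr0_eq vw; rewrite dotpC vw dotpC.
Qed.

Lemma form_rel_mm_sym : mm_sym_linrel form_rel.
Proof. by split; [exact: form_rel_linrel | exact: form_rel_max_monotone | exact: form_rel_sym]. Qed.

Lemma qA_form_rel x : L x -> qA form_rel x = (2^-1 * beta x x)%:E.
Proof.
move=> Lx; have [y xy] := form_rel_dom Lx.
by rewrite (qA_graph form_rel_sym xy) dotpC xy.2.
Qed.

Lemma qA_form_rel_out x : ~ L x -> qA form_rel x = +oo%E.
Proof. by move=> Lx; rewrite qA_notin_dom // => -[y []]. Qed.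

End FormRelation.

(** * Proper functions quadratic on lines *)

Section QuadraticOnLinesForm.
Context {R : realType} {n : nat}.
Local Notation V := 'rV[R]_n.
Variables (f : V -> \bar R) (a : V).
Hypotheses (f_proper : proper_fun f) (f_quad : quadratic_on_lines f)
  (fa : (f a < +oo)%E).

Let D := [set v : V | (f (a + v) < +oo)%E].
Let g v := fine (f (a + v)).

Let gE v : D v -> f (a + v) = (g v)%:E.
Proof. by move=> Dv; rewrite /g fineK // fin_numElt f_proper.1. Qed.

Let g_quad w v : D w -> D (w + v) -> exists al be ga : R,
  0 <= al /\ forall t, g (w + t *: v) = al * t ^+ 2 + be * t + ga.
Proof.
move=> Dw Dwv; have [|al [be [ga [al0 fl]]]] := f_quad.2 (a + w) v Dw; first by rewrite -addrA.
by exists al, be, ga; split=> // t; rewrite /g addrA fl.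
Qed.

Let D0 : D 0. Proof. by rewrite /D /= addr0. Qed.

Let D_line w v t : D w -> D (w + v) -> D (w + t *: v).
Proof.
move=> Dw Dwv; rewrite /D /= addrA.
by apply: quadratic_on_lines_fin; rewrite // -addrA.
Qed.

Let DZ (t : R) v : D v -> D (t *: v).
Proof. by move=> Dv; have := @D_line 0 v t D0; rewrite !add0r; exact. Qed.

Let DD u v : D u -> D v -> D (u + v).
Proof.
move=> Du Dv; have Dm : D (u + 2^-1 *: (v - u)) by apply: D_line; rewrite // addrC subrK.
by have := DZ 2 Dm; rewrite (_ : 2 *: _ = u + v) //; row_field.
Qed.

Let DN v : D v -> D (- v). Proof. by move=> Dv; rewrite -scaleN1r; exact: DZ. Qed.

Let g_line w v t : D w -> D v ->
  g (w + t *: v) = g w + t * ((g (w + v) - g (w - v)) / 2)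
                   + t * t * ((g (w + v) + g (w - v) - 2 * g w) / 2).
Proof.
move=> Dw Dv; have [al [be [ga [_ gl]]]] := g_quad Dw (DD Dw Dv).
have := gl 0; have := gl 1; have := gl (-1).
by rewrite scale0r scale1r scaleN1r addr0 gl => -> -> ->; field.
Qed.

Let g_second_diff_ge0 w v : D w -> D v -> 0 <= g (w + v) + g (w - v) - 2 * g w.
Proof.
move=> Dw Dv; have [al [be [ga [al0 gl]]]] := g_quad Dw (DD Dw Dv).
have := gl 0; have := gl 1; have := gl (-1).
rewrite scale0r scale1r scaleN1r addr0 => -> -> ->; rewrite expr0n expr1n sqrrN expr1n /=.
lra.
Qed.

Let q v := (g v + g (- v)) / 2 - g 0.
Let l v := (g v - g (- v)) / 2.
Let B u v := (q (u + v) - q (u - v)) / 2.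

Let G u v s t := g (s *: u + t *: v).

Let G_line u v : D u -> D v -> forall s0 t0 ds dt r,
  G u v (s0 + r * ds) (t0 + r * dt) =
    G u v s0 t0 + r * ((G u v (s0 + ds) (t0 + dt) - G u v (s0 - ds) (t0 - dt)) / 2)
    + r * r * ((G u v (s0 + ds) (t0 + dt) + G u v (s0 - ds) (t0 - dt) - 2 * G u v s0 t0) / 2).
Proof.
move=> Du Dv s0 t0 ds dt r; rewrite /G.
have Dp s t : D (s *: u + t *: v) by apply: DD; exact: DZ.
have := g_line r (Dp s0 t0) (Dp ds dt).
have -> : s0 *: u + t0 *: v + r *: (ds *: u + dt *: v)
          = (s0 + r * ds) *: u + (t0 + r * dt) *: v by row_ring.
have -> : s0 *: u + t0 *: v + (ds *: u + dt *: v) = (s0 + ds) *: u + (t0 + dt) *: v by row_ring.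
by have -> : s0 *: u + t0 *: v - (ds *: u + dt *: v) = (s0 - ds) *: u + (t0 - dt) *: v by row_ring.
Qed.

Local Notation plane_simpl := (scale1r, scaleN1r, scale0r, scaleNr, addr0, add0r).

Let q_parallelogram u v : D u -> D v -> q (u + v) + q (u - v) = 2 * q u + 2 * q v.
Proof.
move=> Du Dv; have [+ _] := plane_parallelogram_odd (G_line Du Dv).
by rewrite /G !plane_simpl /q !opprD !opprK => ?; lra.
Qed.

Let lD u v : D u -> D v -> l (u + v) = l u + l v.
Proof.
move=> Du Dv; have [_ +] := plane_parallelogram_odd (G_line Du Dv).
by rewrite /G !plane_simpl /l !opprD => ?; lra.
Qed.

Let BZ (s : R) u v : D u -> D v -> B (s *: u) v = s * B u v.
Proof.
move=> Du Dv; have := plane_homogeneous (G_line Du Dv) s.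
by rewrite /G !plane_simpl /B /q !opprD !opprK => ?; lra.
Qed.

Let qN v : q (- v) = q v. Proof. by rewrite /q opprK (addrC (g (- v))). Qed.

Let q0 : q 0 = 0. Proof. by rewrite /q oppr0; lra. Qed.

Let BC u v : B u v = B v u. Proof. by rewrite /B (addrC v) -[v - u]opprB qN. Qed.

Let B_diag v : D v -> B v v = 2 * q v.
Proof.
move=> Dv; have := q_parallelogram Dv Dv.
by rewrite /B subrr q0 addr0 => ->; field.
Qed.

Let B_ge0 v : D v -> 0 <= B v v.
Proof.
move=> Dv; have := g_second_diff_ge0 D0 Dv.
by rewrite B_diag // /q add0r sub0r => ?; lra.
Qed.

Let BD x y z : D x -> D y -> D z -> B (x + y) z = B x z + B y z.
Proof.
move=> Dx Dy Dz.
set c := 2^-1 *: (x + y); set d := 2^-1 *: (x - y).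
have Dc : D c by apply/DZ/DD.
have Dd : D d by apply/DZ/DD/DN.
have P1 := q_parallelogram (DD Dc Dz) Dd.
have P2 := q_parallelogram (DD Dc (DN Dz)) Dd.
have e1 : c + z + d = x + z by rewrite /c /d; row_field.
have e2 : c + z - d = y + z by rewrite /c /d; row_field.
have e3 : c - z + d = x - z by rewrite /c /d; row_field.
have e4 : c - z - d = y - z by rewrite /c /d; row_field.
rewrite e1 e2 in P1; rewrite e3 e4 in P2.
have -> : x + y = 2 *: c by rewrite /c; row_field.
rewrite BZ // /B; lra.
Qed.

Let lZ (t : R) v : D v -> l (t *: v) = t * l v.
Proof.
move=> Dv; have h1 := g_line t D0 Dv; have h2 := g_line (- t) D0 Dv.
rewrite !add0r scaleNr in h1 h2.
by rewrite /l /= h1 h2; field.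
Qed.

Let A := form_rel D B.

Let A_mm_sym : mm_sym_linrel A.
Proof. by apply: form_rel_mm_sym => // x y _ _; exact: BC. Qed.

Let f_quadf b : (forall w, D w -> dotp b w = l w) -> f = quadf A a b (g 0 - dotp b a).
Proof.
move=> bl; apply/funext => x; rewrite /quadf.
have xa : a + (x - a) = x by rewrite addrC subrK.
have [Dx|nDx] := pselect (D (x - a)).
  rewrite qA_form_rel // -EFinD -{1}xa gE //; congr (_%:E).
  by rewrite B_diag // -[in dotp b x]xa dotpDr (bl _ Dx) /q /l; field.
rewrite /A qA_form_rel_out // -{1}xa.
by move/negP: nDx; rewrite -leNgt leye_eq => /eqP ->.
Qed.

Theorem quadratic_on_lines_quadf :
  exists A b c, mm_sym_linrel A /\ f = quadf A a b c.
Proof.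
have [b bl] := dotp_represent D0 DD DZ lD lZ.
by exists A, b, (g 0 - dotp b a); split; [exact: A_mm_sym | exact: f_quadf].
Qed.

Theorem quadratic_on_lines_symmetric_quadf : (forall v, f (a - v) = f (a + v)) ->
  exists A c, mm_sym_linrel A /\ f = quadf A a 0 c.
Proof.
move=> f_sym; exists A, (g 0 - dotp 0 a); split; first exact: A_mm_sym.
by apply: f_quadf => w _; rewrite dotp0l /l /g f_sym subrr mul0r.
Qed.

End QuadraticOnLinesForm.

(** * Epi-limits *)

Lemma not_near_subseq (P : nat -> Prop) : ~ (\forall k \near \oo, P k) ->
  exists phi : nat -> nat, (forall k, phi k < phi k.+1)%N /\ forall k, ~ P (phi k).
Proof.
move=> nP.
have /choice [g gP] : forall N, exists k, (N <= k)%N /\ ~ P k.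
  move=> N; apply: contrapT => nex; apply: nP; exists N => // k /= Nk.
  by apply: contrapT => nPk; apply: nex; exists k.
pose phi := fix phi k := if k is k'.+1 then g (phi k').+1 else g 0%N.
exists phi; split => [k|[|k]] /=; [exact: (gP _).1 | exact: (gP _).2 | exact: (gP _).2].
Qed.

Lemma cvg_subseq {T : topologicalType} (phi : nat -> nat) (u : nat -> T) (x : T) :
  (forall k, phi k < phi k.+1)%N -> u @ \oo --> x -> (u \o phi) @ \oo --> x.
Proof.
move=> phiS ux; apply: (cvg_comp phi u _ ux) => P [N _ NP].
have le_phi k : (k <= phi k)%N by elim: k => // k IHk; exact: leq_ltn_trans IHk (phiS k).
by exists N => // k /= Nk; apply: NP; exact: leq_trans Nk (le_phi k).
Qed.

Section Epiconvergence.
Context {R : realType} {n : nat}.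
Local Notation V := 'rV[R]_n.
Variables (fk : nat -> V -> \bar R) (f : V -> \bar R).
Hypothesis fk_f : epiconverges fk f.

Lemma epi_lim_le (z : nat -> V) (s : nat -> R) p r :
  (\forall k \near \oo, (fk k (z k) <= (s k)%:E)%E) ->
  z @ \oo --> p -> s @ \oo --> r -> (f p <= r%:E)%E.
Proof.
move=> [N _ le_fz] zp sr; apply: (fk_f.1 (p, r)).
exists (addn^~ N), (fun k => (z (k + N)%N, s (k + N)%N)); split => [k|].
  by rewrite addSn.
split=> [k|]; first by apply: le_fz; rewrite /= leq_addl.
have zN : (fun k => z (k + N)%N) @ \oo --> p by rewrite (cvg_shiftn N).
have sN : (fun k => s (k + N)%N) @ \oo --> r by rewrite (cvg_shiftn N).
exact: (cvg_pair zN sN).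
Qed.

Lemma epi_lim_gt (z : nat -> V) p r :
  z @ \oo --> p -> (r%:E < f p)%E -> \forall k \near \oo, (r%:E < fk k (z k))%E.
Proof.
move=> zp rf; apply: contrapT => /not_near_subseq [phi [phiS nlt]].
suff : (f p <= r%:E)%E by rewrite leNgt rf.
apply: (fk_f.1 (p, r)); exists phi, (fun k => (z (phi k), r)); do 2!split => //.
  by move=> k; rewrite /epigraph /= leNgt; apply/negP; exact: nlt.
exact: (cvg_pair (cvg_subseq phiS zp) (cvg_cst r)).
Qed.

Lemma epi_recovery x r : (f x <= r%:E)%E ->
  exists (z : nat -> V) (s : nat -> R), [/\ z @ \oo --> x, s @ \oo --> r &
    \forall k \near \oo, (fk k (z k) <= (s k)%:E)%E].
Proof.
move=> fxr; have [u [ux near_u]] := fk_f.2 (x, r) fxr.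
exists (fst \o u), (snd \o u); split => //.
- exact: cvg_comp ux (@cvg_fst _ _ (nbhs x) (nbhs r) _).
- exact: cvg_comp ux (@cvg_snd _ _ (nbhs x) (nbhs r) _).
Qed.

Lemma epi_lim_even :
  (forall k x, fk k (- x) = fk k x) -> forall x, f (- x) = f x.
Proof.
move=> fk_even.
have le_fin x r : (f x <= r%:E)%E -> (f (- x)%R <= r%:E)%E.
  move=> /epi_recovery [z [s [zx sr near_z]]].
  apply: (@epi_lim_le (fun k => - z k) s _ _ _ (cvgN zx) sr).
  by apply: filterS near_z => k; rewrite fk_even.
have le x : (f (- x)%R <= f x)%E.
  case fx : (f x) => [r| |]; first by apply: le_fin; rewrite fx.
    by rewrite leey.
  by rewrite (@eq_ninfty _ (f (- x)%R)) // => r; apply: le_fin; rewrite fx leNye.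
by move=> x; apply/le_anti; rewrite le /=; have := le (- x); rewrite opprK.
Qed.

End Epiconvergence.

Section EpiLimit.
Context {R : realType} {n : nat}.
Local Notation V := 'rV[R]_n.

Lemma cvg_through (z1 z3 : nat -> V) (p v : V) (u1 u3 : R) : u1 != u3 ->
  z1 @ \oo --> p + u1 *: v -> z3 @ \oo --> p + u3 *: v ->
  exists P W : nat -> V, [/\ forall k, P k + u1 *: W k = z1 k,
    forall k, P k + u3 *: W k = z3 k &
    forall t, (fun k => P k + t *: W k) @ \oo --> p + t *: v].
Proof.
move=> u13 z1p z3p; have d0 : u3 - u1 != 0 by rewrite subr_eq0 eq_sym.
pose W k := (u3 - u1)^-1 *: (z3 k - z1 k); pose P k := z1 k - u1 *: W k.
have Wv : W @ \oo --> v.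
  have -> : v = (u3 - u1)^-1 *: (p + u3 *: v - (p + u1 *: v)) by row_field.
  exact: cvgZ (cvg_cst _) (cvgB z3p z1p).
have Pp : P @ \oo --> p.
  have -> : p = p + u1 *: v - u1 *: v by rewrite addrK.
  exact: cvgB z1p (cvgZ (cvg_cst _) Wv).
exists P, W; split=> [k|k|t]; rewrite ?/P ?/W; first by rewrite subrK.
  by row_field.
exact: cvgD Pp (cvgZ (cvg_cst _) Wv).
Qed.

Variables (fk : nat -> V -> \bar R) (f : V -> \bar R).
Hypotheses (fk_f : epiconverges fk f) (fk_quad : forall k, quadratic_on_lines (fk k)).
Hypothesis f_proper : proper_fun f.

Lemma epi_recovery_line (p v : V) (u1 u3 r1 r3 : R) : u1 != u3 ->
  (f (p + u1 *: v) <= r1%:E)%E -> (f (p + u3 *: v) <= r3%:E)%E ->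
  exists (P W : nat -> V) (s1 s3 : nat -> R),
    [/\ forall t, (fun k => P k + t *: W k) @ \oo --> p + t *: v,
        s1 @ \oo --> r1, s3 @ \oo --> r3 &
        \forall k \near \oo, exists a b c : R, [/\ 0 <= a,
          a * u1 ^+ 2 + b * u1 + c <= s1 k, a * u3 ^+ 2 + b * u3 + c <= s3 k &
          forall t, fk k (P k + t *: W k) = (a * t ^+ 2 + b * t + c)%:E]].
Proof.
move=> u13 f1 f3.
have [z1 [s1 [z1p s1r fz1]]] := epi_recovery fk_f f1.
have [z3 [s3 [z3p s3r fz3]]] := epi_recovery fk_f f3.
have [P [W [PW1 PW3 PWt]]] := cvg_through u13 z1p z3p.
exists P, W, s1, s3; split => //; near=> k.
have fz1k : (fk k (P k + u1 *: W k) <= (s1 k)%:E)%E by rewrite PW1; near: k.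
have fz3k : (fk k (P k + u3 *: W k) <= (s3 k)%:E)%E by rewrite PW3; near: k.
have [a [b [c [a0 fkQ]]]] := quadratic_on_lines_reparam (fk_quad k) u13
  (le_lt_trans fz1k (ltry _)) (le_lt_trans fz3k (ltry _)).
by exists a, b, c; split; rewrite -?lee_fin -?fkQ.
Unshelve. all: by end_near.
Qed.

Lemma epi_lim_convex (p v : V) (r0 r1 t : R) :
  (f (p + 0 *: v) <= r0%:E)%E -> (f (p + 1 *: v) <= r1%:E)%E -> 0 <= t <= 1 ->
  (f (p + t *: v) <= ((1 - t) * r0 + t * r1)%:E)%E.
Proof.
move=> f0 f1 /andP[t0 t1]; have u01 : (0 : R) != 1 by rewrite eq_sym oner_eq0.
have [P [W [s0 [s1 [PWt s0r s1r near_quad]]]]] := epi_recovery_line u01 f0 f1.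
apply: (epi_lim_le fk_f (s := fun k => (1 - t) * s0 k + t * s1 k) _ (PWt t)).
  apply: filterS near_quad => k [a [b [c [a0 Q0 Q1 ->]]]].
  rewrite lee_fin; rewrite expr0n expr1n /= !mulr0 !mulr1 !add0r in Q0 Q1.
  have tt : 0 <= t * (1 - t) by rewrite mulr_ge0 // subr_ge0.
  nra.
by apply: cvgD; apply: cvgM => //; exact: cvg_cst.
Qed.

Lemma epi_lim_extrapolation (p v : V) (u1 u2 u3 t r1 r2 r3 : R) :
  u1 < u2 < u3 -> 0 <= (t - u1) * (t - u3) ->
  (f (p + u1 *: v) <= r1%:E)%E -> (r2%:E <= f (p + u2 *: v))%E ->
  (f (p + u3 *: v) <= r3%:E)%E ->
  (f (p + t *: v) <= (lagrange3 u1 u2 u3 r1 r2 r3 t)%:E)%E.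
Proof.
move=> u123 ht f1 f2 f3; have /andP[lt12 lt23] := u123.
have u13 : u1 != u3 by rewrite lt_eqF // (lt_trans lt12 lt23).
have [P [W [s1 [s3 [PWt s1r s3r near_quad]]]]] := epi_recovery_line u13 f1 f3.
apply/lee_addgt0Pr => e e0.
have [K K0 lagK] := lagrange3_subr2 r1 r2 r3 u123 ht.
(* The middle value is lowered by [d] to become a strict, hence eventual, lower bound. *)
pose d := e / (K + 1); have d0 : 0 < d by rewrite divr_gt0 // ltr_wpDl.
apply: (@le_trans _ _ (lagrange3 u1 u2 u3 r1 (r2 - d) r3 t)%:E); last first.
  rewrite lagK -EFinD lee_fin lerD2l /d mulrAC ler_pdivrMr ?ltr_wpDl //.
  by rewrite ler_pM2l // lerDl.
have f2d : \forall k \near \oo, ((r2 - d)%:E < fk k (P k + u2 *: W k))%E.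
  have r2d : ((r2 - d)%:E < f (p + u2 *: v))%E.
    by apply: lt_le_trans f2; rewrite lte_fin ltrBlDr ltrDl.
  exact (epi_lim_gt fk_f (PWt u2) r2d).
apply: (epi_lim_le fk_f (s := fun k => lagrange3 u1 u2 u3 (s1 k) (r2 - d) (s3 k) t) _ (PWt t)).
  apply: filterS2 near_quad f2d => k [a [b [c [_ Q1 Q3 fkQ]]]].
  rewrite !fkQ lte_fin lee_fin -(lagrange3_quadratic a b c t u123) => Q2.
  by apply: lagrange3_le => //; exact: ltW.
by rewrite /lagrange3; apply: cvgD; [apply: cvgD |]; apply: cvgM => //; exact: cvg_cst.
Qed.

Lemma epi_lim_quadratic_on_lines : quadratic_on_lines f.
Proof.
split=> [|x v fx fxv]; first exact: f_proper.1.
have finE y : (f y < +oo)%E -> f y = (fine (f y))%:E.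
  by move=> fy; rewrite fineK // fin_numElt f_proper.1.
have f0 : (f (x + 0 *: v) <= (fine (f x))%:E)%E by rewrite scale0r addr0 -finE.
have f1 : (f (x + 1 *: v) <= (fine (f (x + v)))%:E)%E by rewrite scale1r -finE.
have fin01 t : 0 <= t <= 1 -> (f (x + t *: v) < +oo)%E.
  by move=> t01; apply: le_lt_trans (epi_lim_convex f0 f1 t01) (ltry _).
have h01 : 0 <= (2^-1 : R) <= 1 by apply/andP; split; lra.
have fin t : (f (x + t *: v) < +oo)%E.
  have [/fin01 //|t01] := boolP (0 <= t <= 1).
  have h012 : 0 < (2^-1 : R) < 1 by apply/andP; split; lra.
  have ht : 0 <= (t - 0) * (t - 1).
    by move: t01; rewrite negb_and -!ltNge => /orP[]; nra.
  have fh := finE _ (fin01 _ h01).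
  apply: le_lt_trans (epi_lim_extrapolation h012 ht f0 _ f1) (ltry _).
  by rewrite fh.
pose psi t := fine (f (x + t *: v)).
have psiE t : f (x + t *: v) = (psi t)%:E by exact: finE (fin t).
have [a [b [c psiQ]]] : exists a b c : R, forall t, psi t = a * t ^+ 2 + b * t + c.
  apply: extrapolation_bounded_quadratic => u1 u2 u3 t u123 ht.
  by rewrite -lee_fin -psiE; apply: epi_lim_extrapolation; rewrite ?psiE.
exists a, b, c; split=> [|t]; last by rewrite psiE psiQ.
have psi0 : (f (x + 0 *: v) <= (psi 0)%:E)%E by rewrite psiE.
have psi1 : (f (x + 1 *: v) <= (psi 1)%:E)%E by rewrite psiE.
have := epi_lim_convex psi0 psi1 h01.
by rewrite psiE lee_fin !psiQ expr0n expr1n /=; lra.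
Qed.

End EpiLimit.


Theorem proposition5p7 (R : realType) (n : nat) :
  (* (i) *)
  (forall (A : nat -> set ('rV[R]_n * 'rV[R]_n)) (a b : nat -> 'rV[R]_n)
          (c : nat -> R) (f : 'rV[R]_n -> \bar R),
      (forall k, mm_sym_linrel (A k)) ->
      epiconverges (fun k => quadf (A k) (a k) (b k) (c k)) f ->
      proper_fun f ->
      exists (A0 : set ('rV[R]_n * 'rV[R]_n)) (a0 b0 : 'rV[R]_n) (c0 : R),
        mm_sym_linrel A0 /\ f = quadf A0 a0 b0 c0)
  /\
  (* (ii) *)
  (forall (A : nat -> set ('rV[R]_n * 'rV[R]_n)) (c : nat -> R)
          (f : 'rV[R]_n -> \bar R),
      (forall k, mm_sym_linrel (A k)) ->
      epiconverges (fun k => fun x => (qA (A k) x + (c k)%:E)%E) f ->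
      proper_fun f ->
      exists (A0 : set ('rV[R]_n * 'rV[R]_n)) (c0 : R),
        mm_sym_linrel A0 /\ f = (fun x => (qA A0 x + c0%:E)%E)).
Proof.
have quad (A : set ('rV[R]_n * 'rV[R]_n)) a b (c : R) :
    mm_sym_linrel A -> quadratic_on_lines (quadf A a b c).
  by move=> [linA [monoA _] symA]; exact: quadf_quadratic_on_lines.
split=> [A a b c f A_mm fk_f f_proper | A c f A_mm].
  have f_quad := epi_lim_quadratic_on_lines fk_f (fun k => quad _ _ _ _ (A_mm k)) f_proper.
  have [x0 fx0] := f_proper.2.
  have [A0 [b0 [c0 [A0_mm ->]]]] := quadratic_on_lines_quadf f_proper f_quad fx0.
  by exists A0, x0, b0, c0.
rewrite (funext (fun k => esym (quadf00 (A k) (c k)))) => fk_f f_proper.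
have f_quad := epi_lim_quadratic_on_lines fk_f (fun k => quad _ _ _ _ (A_mm k)) f_proper.
have f_even : forall x, f (- x) = f x.
  apply: (epi_lim_even fk_f) => k x; have [linA _ symA] := A_mm k.
  by rewrite !quadf00 qA_oppr.
have f0 : (f 0%R < +oo)%E.
  have [x0 fx0] := f_proper.2.
  have fNx0 : (f (x0 + (- x0 - x0))%R < +oo)%E by rewrite addrA subrr add0r f_even.
  have -> : 0 = x0 + 2^-1 *: (- x0 - x0) by row_field.
  exact: quadratic_on_lines_fin.
have f_sym v : f (0 - v) = f (0 + v) by rewrite !add0r f_even.
have [A0 [c0 [A0_mm ->]]] := quadratic_on_lines_symmetric_quadf f_proper f_quad f0 f_sym.
by exists A0, c0; rewrite quadf00.
Qed.
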